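(* Knowledge of the joining pairs alone does not determine the subtrajectory join result; that is, the breaking points are necessary. Precisely: there exist parameters $\epsilon_{sp}>0$, $\epsilon_t\ge 0$, $\delta t$ and two inputs $(R,S)$ and $(R',S')$ of the subtrajectory join such that the sets of joining pairs $JP(R,S)$ and $JP(R',S')$ are equal, but the sets of maximally matching pairs of subtrajectories returned by the subtrajectory join on $(R,S)$ and on $(R',S')$ are different (the second input differing from the first by an additional point of a trajectory that is a breaking point).
   Context: A trajectory $r$ is a finite sequence of timestamped planar points $r_1,\dots,r_N$, $r_i=(x_i,y_i,t_i)$, with increasing timestamps; a subtrajectory $r_{i,j}$ ($i<j$) is the contiguous subsequence $r_i,\dots,r_j$. $DistS$ is the Euclidean distance of the $(x,y)$ coordinates and $DistT(r_i,s_j)=|r_i.t-s_j.t|$. For (sub)trajectories $r=r_1..r_N$ and $s=s_1..s_M$ the common lifespan duration is $\Delta w_{r,s}=\min(r_N.t,s_M.t)-\max(r_1.t,s_1.t)$. Given a spatial threshold $\epsilon_{sp}$, temporal tolerance $\epsilon_t$ and duration $\delta t$, a pair of subtrajectories $(r',s')$ is matching iff $\Delta w_{r',s'}\ge \delta t-2\epsilon_t$, every point of $r'$ has some point of $s'$ within spatial distance $\epsilon_{sp}$ and temporal distance $\epsilon_t$, and every point of $s'$ has some point of $r'$ within these distances. A matching pair $(r',s')$ with $r'$ a subtrajectory of $r$ and $s'$ of $s$ is maximally matching iff there is no subtrajectory $r''\supsetneq r'$ of $r$ or $s''\supsetneq s'$ of $s$ such that $(r'',s')$, $(r',s'')$ or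 $(r'',s'')$ is matching. For two sets of trajectories $R,S$, the subtrajectory join returns all maximally matching pairs $(r',s')$ with $r'$ a subtrajectory of some $r\in R$ and $s'$ of some $s\in S$. A joining pair is a pair of points $(r_i,s_j)$, $r_i$ a point of a trajectory in $R$, $s_j$ a point of a trajectory in $S$, with $DistS(r_i,s_j)\le\epsilon_{sp}$ and $DistT(r_i,s_j)\le\epsilon_t$; $JP(R,S)$ is the set of joining pairs. A point is a breaking point if it belongs to no joining pair. *)

From Stdlib Require Import Reals Lra List Sorted.
Import ListNotations.
Open Scope R_scope.

Record point := mkPoint { px : R; py : R; pt : R }.

Definition valid_traj (r : list point) : Prop :=
  r <> [] /\ Sorted (fun a b => pt a < pt b) r.

(* r' = r_{i,j} (0-indexed, i < j): contiguous subsequence r_i..r_j. *)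
Definition is_subtraj (r' r : list point) : Prop :=
  exists i j : nat, (i < j)%nat /\ (j < length r)%nat /\
    r' = firstn (S j - i) (skipn i r).

Definition DistS (p q : point) : R :=
  sqrt ((px p - px q) ^ 2 + (py p - py q) ^ 2).

Definition DistT (p q : point) : R := Rabs (pt p - pt q).

Definition dummy : point := mkPoint 0 0 0.
Definition first_t (r : list point) : R := pt (hd dummy r).
Definition last_t (r : list point) : R := pt (last r dummy).

Definition lifespan (r s : list point) : R :=
  Rmin (last_t r) (last_t s) - Rmax (first_t r) (first_t s).

Definition close (esp et : R) (p q : point) : Prop :=
  DistS p q <= esp /\ DistT p q <= et.

Definition matching (esp et dt : R) (r s : list point) : Prop :=
  lifespan r s >= dt - 2 * et /\
  (forall p, In p r -> exists q, In q s /\ close esp et p q) /\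
  (forall q, In q s -> exists p, In p r /\ close esp et p q).

Definition strict_super (r1 r2 r : list point) : Prop :=
  is_subtraj r2 r /\ (exists a b, r2 = a ++ r1 ++ b) /\ r2 <> r1.

Definition maximally_matching (esp et dt : R) (r' s' r s : list point) : Prop :=
  is_subtraj r' r /\ is_subtraj s' s /\ matching esp et dt r' s' /\
  (forall r'', strict_super r' r'' r -> ~ matching esp et dt r'' s') /\
  (forall s'', strict_super s' s'' s -> ~ matching esp et dt r' s'') /\
  (forall r'' s'', strict_super r' r'' r -> strict_super s' s'' s ->
      ~ matching esp et dt r'' s'').

Definition subtraj_join (esp et dt : R) (RR SS : list (list point))
    (r' s' : list point) : Prop :=
  exists r s, In r RR /\ In s SS /\ maximally_matching esp et dt r' s' r s.

Definition JP (esp et : R) (RR SS : list (list point)) (p q : point) : Prop :=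
  (exists r, In r RR /\ In p r) /\ (exists s, In s SS /\ In q s) /\
  close esp et p q.

Definition breaking_point (esp et : R) (RR SS : list (list point)) (p : point) : Prop :=
  ((exists r, In r RR /\ In p r) \/ (exists s, In s SS /\ In p s)) /\
  (forall q, ~ JP esp et RR SS p q) /\ (forall q, ~ JP esp et RR SS q p).

From Stdlib Require Import Reals List Lra Lia.
Import ListNotations.
Open Scope R_scope.

(* Take R = S = {q0 q2}, a trajectory matching itself, and obtain R' by
   inserting between its two points a point whose timestamp is shared by no
   point of S.  With temporal tolerance 0 that point joins with nothing, so
   JP is unchanged; but it breaks the trajectory, and the pair (q0 q2, q0 q2)
   found on (R, S) is no longer a pair of subtrajectories of (R', S'). *)

Lemma close_refl esp et p : 0 <= esp -> 0 <= et -> close esp et p p.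
Proof.
  intros Hesp Het; unfold close, DistS, DistT.
  replace ((px p - px p) ^ 2 + (py p - py p) ^ 2) with 0 by ring.
  replace (pt p - pt p) with 0 by ring.
  rewrite sqrt_0, Rabs_R0; lra.
Qed.

Lemma close_pt_eq esp p q : close esp 0 p q -> pt p = pt q.
Proof.
  intros [_ HT]; unfold DistT, Rabs in HT.
  destruct Rcase_abs; lra.
Qed.

Lemma matching_refl esp et dt r :
  0 <= esp -> 0 <= et -> dt - 2 * et <= last_t r - first_t r ->
  matching esp et dt r r.
Proof.
  intros Hesp Het Hdt; split; [|split].
  - unfold lifespan, Rmin, Rmax; repeat destruct Rle_dec; lra.
  - intros p Hp; exists p; auto using close_refl.
  - intros p Hp; exists p; auto using close_refl.
Qed.

Lemma is_subtraj_refl r : (1 < length r)%nat -> is_subtraj r r.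
Proof.
  intros Hr; exists 0%nat, (pred (length r)).
  repeat split; try lia.
  replace (S (pred (length r)) - 0)%nat with (length r) by lia.
  now rewrite firstn_all.
Qed.

Lemma is_subtraj_infix r' r : is_subtraj r' r -> exists a b, r = a ++ r' ++ b.
Proof.
  intros (i & j & _ & _ & ->).
  exists (firstn i r), (skipn (S j - i) (skipn i r)).
  now rewrite !firstn_skipn.
Qed.

Lemma strict_super_self r r'' : ~ strict_super r r'' r.
Proof.
  intros (Hsub & (a & b & ->) & Hneq).
  destruct (is_subtraj_infix _ _ Hsub) as (c & d & Hr).
  apply (f_equal (@length point)) in Hr.
  rewrite !length_app in Hr.
  destruct a, b; simpl in Hr; try lia.
  apply Hneq; now rewrite app_nil_r.
Qed.

Lemma maximally_matching_self esp et dt r :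
  (1 < length r)%nat -> matching esp et dt r r ->
  maximally_matching esp et dt r r r r.
Proof.
  intros Hr Hm.
  split; [now apply is_subtraj_refl|]; split; [now apply is_subtraj_refl|].
  split; [exact Hm|].
  split; [|split].
  - intros r'' Hs; exfalso; exact (strict_super_self _ _ Hs).
  - intros s'' Hs; exfalso; exact (strict_super_self _ _ Hs).
  - intros r'' s'' Hs; exfalso; exact (strict_super_self _ _ Hs).
Qed.

Lemma pair_not_infix_of_triple (a p b : point) :
  p <> a -> p <> b -> ~ exists l1 l2, [a; p; b] = l1 ++ [a; b] ++ l2.
Proof.
  intros Hpa Hpb (l1 & l2 & E).
  destruct l1 as [|x [|y l1]]; simpl in E; injection E; try congruence.
  intros Elen%(f_equal (@length point)); simpl in Elen.
  rewrite length_app in Elen; simpl in Elen; lia.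
Qed.

Lemma In_insert (r : list point) k p x :
  In x (firstn k r ++ p :: skipn k r) <-> p = x \/ In x r.
Proof.
  assert (Hr : In x r <-> In x (firstn k r) \/ In x (skipn k r))
    by now rewrite <- in_app_iff, firstn_skipn.
  rewrite in_app_iff; simpl; tauto.
Qed.

Lemma in_some_traj_insert (R1 R2 : list (list point)) r k p x :
  (exists r0, In r0 (R1 ++ (firstn k r ++ p :: skipn k r) :: R2) /\ In x r0) <->
  x = p \/ exists r0, In r0 (R1 ++ r :: R2) /\ In x r0.
Proof.
  split.
  - intros (r0 & Hr0 & Hx); apply in_app_iff in Hr0.
    destruct Hr0 as [H1 | [<- | H2]].
    + right; exists r0; split; auto using in_or_app.
    + apply In_insert in Hx as [<- | Hx]; auto.
      right; exists r; split; auto using in_or_app, in_eq.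
    + right; exists r0; split; auto using in_or_app, in_cons.
  - intros [-> | (r0 & Hr0 & Hx)].
    + exists (firstn k r ++ p :: skipn k r); split.
      * auto using in_or_app, in_eq.
      * apply In_insert; auto.
    + apply in_app_iff in Hr0; destruct Hr0 as [H1 | [<- | H2]].
      * exists r0; split; auto using in_or_app.
      * exists (firstn k r ++ p :: skipn k r); split.
        -- auto using in_or_app, in_eq.
        -- apply In_insert; auto.
      * exists r0; split; auto using in_or_app, in_cons.
Qed.

Section InsertFarPoint.

Variables (esp et : R) (R1 R2 SS : list (list point)) (r : list point).
Variables (k : nat) (p : point).
Hypothesis p_far : forall s q, In s SS -> In q s -> ~ close esp et p q.

Let RR := R1 ++ r :: R2.
Let RR' := R1 ++ (firstn k r ++ p :: skipn k r) :: R2.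

Lemma JP_insert_far x y : JP esp et RR SS x y <-> JP esp et RR' SS x y.
Proof.
  unfold JP, RR, RR'; rewrite in_some_traj_insert.
  split.
  - intros (Hx & Hy & Hc); auto.
  - intros ([-> | Hx] & (s & Hs & Hy) & Hc).
    + exfalso; exact (p_far s y Hs Hy Hc).
    + split; [exact Hx|]; split; [exists s; auto | exact Hc].
Qed.

Hypothesis p_not_in_SS : ~ exists s, In s SS /\ In p s.

Lemma breaking_point_insert_far : breaking_point esp et RR' SS p.
Proof.
  split; [|split].
  - left; apply in_some_traj_insert; auto.
  - intros q (_ & (s & Hs & Hq) & Hc); exact (p_far s q Hs Hq Hc).
  - intros q (_ & Hp & _); exact (p_not_in_SS Hp).
Qed.

End InsertFarPoint.

Definition q0 := mkPoint 0 0 0.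
Definition q2 := mkPoint 0 0 2.
Definition outlier := mkPoint 10 0 1.

Lemma outlier_far s q :
  In s [[q0; q2]] -> In q s -> ~ close 1 0 outlier q.
Proof.
  intros [<- | []] Hq Hc%close_pt_eq.
  destruct Hq as [<- | [<- | []]]; simpl in Hc; lra.
Qed.

Lemma outlier_not_in_S : ~ exists s, In s [[q0; q2]] /\ In outlier s.
Proof.
  intros (s & [<- | []] & [E | [E | []]]);
    apply (f_equal pt) in E; simpl in E; lra.
Qed.

Lemma join_q0q2_before :
  subtraj_join 1 0 0 [[q0; q2]] [[q0; q2]] [q0; q2] [q0; q2].
Proof.
  exists [q0; q2], [q0; q2]; split; [now left|]; split; [now left|].
  apply maximally_matching_self; [simpl; lia|].
  apply matching_refl; unfold last_t, first_t; simpl; lra.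
Qed.

Lemma join_q0q2_after :
  ~ subtraj_join 1 0 0 [[q0; outlier; q2]] [[q0; q2]] [q0; q2] [q0; q2].
Proof.
  intros (r & s & [<- | []] & _ & Hsub & _).
  apply is_subtraj_infix in Hsub.
  revert Hsub; apply pair_not_infix_of_triple;
    intros E; apply (f_equal pt) in E; simpl in E; lra.
Qed.

Theorem lemma1 :
  exists (esp et dt : R) (RR SS RR' SS' : list (list point)),
    esp > 0 /\ et >= 0 /\
    (forall r, In r RR -> valid_traj r) /\ (forall s, In s SS -> valid_traj s) /\
    (forall r, In r RR' -> valid_traj r) /\ (forall s, In s SS' -> valid_traj s) /\
    (forall p q, JP esp et RR SS p q <-> JP esp et RR' SS' p q) /\
    ~ (forall r' s', subtraj_join esp et dt RR SS r' s' <->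
                     subtraj_join esp et dt RR' SS' r' s') /\
    SS' = SS /\
    (exists (R1 R2 : list (list point)) (r : list point) (k : nat) (p : point),
        RR = R1 ++ r :: R2 /\
        RR' = R1 ++ (firstn k r ++ p :: skipn k r) :: R2 /\
        breaking_point esp et RR' SS' p).
Proof.
  assert (valid_short : forall r, In r [[q0; q2]] -> valid_traj r).
  { intros r [<- | []]; split; [discriminate|].
    repeat constructor; simpl; lra. }
  assert (valid_long : forall r, In r [[q0; outlier; q2]] -> valid_traj r).
  { intros r [<- | []]; split; [discriminate|].
    repeat constructor; simpl; lra. }
  exists 1, 0, 0, [[q0; q2]], [[q0; q2]], [[q0; outlier; q2]], [[q0; q2]].
  do 6 (split; [first [lra | assumption] |]).
  split; [exact (JP_insert_far _ _ [] [] _ [q0; q2] 1 _ outlier_far) |].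
  split; [intros Hjoin; apply join_q0q2_after, Hjoin, join_q0q2_before |].
  split; [reflexivity |].
  exists [], [], [q0; q2], 1%nat, outlier.
  split; [reflexivity |]; split; [reflexivity |].
  exact (breaking_point_insert_far _ _ [] [] _ [q0; q2] 1 _ outlier_far outlier_not_in_S).
Qed.
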